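(* Let $G = N \rtimes H$ with $N, H$ finite abelian groups. Let $P_N$ be the idempotent eigenbasis of $\mathbb{C}[N]$, let $\mathcal{O}_\alpha$ be an $H$-orbit in $P_N$ (under conjugation), $H_\alpha$ the stabilizer in $H$ of an element of $\mathcal{O}_\alpha$, and $\{u_1,\dots,u_{|H_\alpha|}\}$ the idempotent eigenbasis of $\mathbb{C}[H_\alpha]$. Then for every $v_i \in \mathcal{O}_\alpha$ and every $1 \le p \le |H_\alpha|$, the element $v_iu_p$ is a primitive idempotent of $\mathbb{C}[G]$.
   Context: $N$ is a normal subgroup and $H$ acts on $N$ by conjugation, $G = NH$, $N\cap H = \{e\}$; $\mathbb{C}[N]$, $\mathbb{C}[H_\alpha]$ are regarded as subalgebras of $\mathbb{C}[G]$. For a finite abelian group $K$, the idempotent eigenbasis of $\mathbb{C}[K]$ is the unique basis $\{J_1,\dots,J_{|K|}\}$ of $\mathbb{C}[K]$ consisting of simultaneous eigenvectors of left multiplication by all elements of $\mathbb{C}[K]$ and satisfying $J_p^2 = J_p$, $J_pJ_q = 0$ for $p\neq q$. Conjugation by $h\in H$ is an algebra automorphism of $\mathbb{C}[N]$ and therefore permutes $P_N$; since $H$ is abelian all elements of an orbit have the same stabilizer. An idempotent $u$ is primitive if it cannot be written as $u = u_1+u_2$ with $u_1,u_2$ nonzero idempotents satisfying $u_1u_2=u_2u_1=0$. *)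

From HB Require Import structures.
From mathcomp Require Import all_boot all_order all_algebra all_fingroup all_solvable all_field all_character.
Set Implicit Arguments. Unset Strict Implicit. Unset Printing Implicit Defensive.
Import GRing.Theory Num.Theory.
Local Open Scope ring_scope.

(* The complex group algebra C[gT] of a finite group type gT: an element
   sum_g a(g) g is represented by its coefficient function a. *)
Definition galg (gT : finGroupType) := {ffun gT -> algC}.

Definition gmul (gT : finGroupType) (a b : galg gT) : galg gT :=
  [ffun g => \sum_(x : gT) a x * b (x^-1 * g)%g].

(* Subalgebra C[K] for K a subset (subgroup) of gT: elements supported in K. *)
Definition in_galg (gT : finGroupType) (K : {set gT}) (a : galg gT) : bool :=
  [forall x, (x \notin K) ==> (a x == 0)].

(* Conjugation by h as an automorphism of C[gT]: n |-> h n h^-1,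
   i.e. coefficient at m becomes a(h^-1 m h) = a (m ^ h). *)
Definition gconj (gT : finGroupType) (h : gT) (a : galg gT) : galg gT :=
  [ffun m => a (m ^ h)%g].

Definition gscale (gT : finGroupType) (c : algC) (a : galg gT) : galg gT :=
  [ffun g => c * a g].

Definition gidem (gT : finGroupType) (u : galg gT) : Prop := gmul u u = u.

Definition idem_eigenbasis (gT : finGroupType) (K : {set gT}) (P : seq (galg gT)) : Prop :=
  [/\ size P = #|K|,
      uniq P,
      (forall J, J \in P -> in_galg K J),
      (forall c : 'I_(size P) -> algC,
          \sum_(i < size P) gscale (c i) P`_i = 0 -> forall i, c i = 0)
    & (forall a, in_galg K a ->
          exists c : 'I_(size P) -> algC, a = \sum_(i < size P) gscale (c i) P`_i)] /\
  [/\ (forall a J, in_galg K a -> J \in P -> exists lam : algC, gmul a J = gscale lam J)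
    & (forall i j : 'I_(size P),
          gmul P`_i P`_j = if i == j then P`_i else 0)].

Definition primitive_idem (gT : finGroupType) (G : {set gT}) (u : galg gT) : Prop :=
  [/\ in_galg G u, gidem u, u != 0 &
      ~ exists u1 u2 : galg gT,
          [/\ in_galg G u1, in_galg G u2, gidem u1 & gidem u2] /\
          [/\ u1 != 0, u2 != 0, gmul u1 u2 = 0, gmul u2 u1 = 0 & u = u1 + u2]].

From HB Require Import structures.
From mathcomp Require Import all_boot all_order all_algebra all_fingroup all_solvable all_field all_character.
Import GRing.Theory Num.Theory.
Set Implicit Arguments. Unset Strict Implicit. Unset Printing Implicit Defensive.
Local Open Scope ring_scope.

(* Let v = h v0 h^-1 be a conjugate of an element v0 of the idempotent
   eigenbasis of C[N], H_a the stabiliser of v0 in H, u an element of the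
   idempotent eigenbasis of C[H_a], and e = v u.  The proof rests on the
   criterion: a nonzero idempotent e of C[G] with e C[G] e ⊆ C e is primitive
   (a decomposition e = e1 + e2 into orthogonal idempotents forces e1 = c e
   with c^2 = c, so c ∈ {0,1}).  Finally, for g = n k with n ∈ N, k ∈ H one has
   e δ_n = χ(n) e and e δ_k e = v (v^k) δ_k u, which is 0 unless v^k = v, i.e.
   k ∈ H_a, in which case it is a multiple of e because u is an eigenvector
   of δ_k.  Linearity gives e C[G] e ⊆ C e, and primitivity follows. *)

Section GroupAlgebra.
Variable gT : finGroupType.
Implicit Types a b c : galg gT.

Lemma gmulA a b c : gmul (gmul a b) c = gmul a (gmul b c).
Proof.
apply/ffunP => g; rewrite !ffunE.
under eq_bigr do rewrite ffunE big_distrl /=.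
rewrite exchange_big /=; apply: eq_bigr => x _.
rewrite ffunE big_distrr /= (reindex_inj (mulgI x)) /=.
by apply: eq_bigr => z _; rewrite mulKg invMg -mulgA mulrA.
Qed.

Lemma gmulDl a b c : gmul (a + b) c = gmul a c + gmul b c.
Proof.
by apply/ffunP => g; rewrite !ffunE -big_split; apply: eq_bigr => x _; rewrite ffunE mulrDl.
Qed.

Lemma gmulDr a b c : gmul a (b + c) = gmul a b + gmul a c.
Proof.
by apply/ffunP => g; rewrite !ffunE -big_split; apply: eq_bigr => x _; rewrite ffunE mulrDr.
Qed.

Lemma gmul0l a : gmul 0 a = 0.
Proof. by apply/ffunP => g; rewrite !ffunE big1 // => x _; rewrite ffunE mul0r. Qed.

Lemma gmul0r a : gmul a 0 = 0.
Proof. by apply/ffunP => g; rewrite !ffunE big1 // => x _; rewrite ffunE mulr0. Qed.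

Lemma gmulZl (k : algC) a b : gmul (gscale k a) b = gscale k (gmul a b).
Proof.
by apply/ffunP => g; rewrite !ffunE big_distrr; apply: eq_bigr => x _; rewrite ffunE -mulrA.
Qed.

Lemma gmulZr (k : algC) a b : gmul a (gscale k b) = gscale k (gmul a b).
Proof.
by apply/ffunP => g; rewrite !ffunE big_distrr; apply: eq_bigr => x _; rewrite !ffunE mulrCA.
Qed.

Lemma gmul_sumr I (r : seq I) (P : pred I) (F : I -> galg gT) a :
  gmul a (\sum_(i <- r | P i) F i) = \sum_(i <- r | P i) gmul a (F i).
Proof. exact: (big_morph (gmul a) (gmulDr a) (gmul0r a)). Qed.

Lemma gmul_suml I (r : seq I) (P : pred I) (F : I -> galg gT) a :
  gmul (\sum_(i <- r | P i) F i) a = \sum_(i <- r | P i) gmul (F i) a.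
Proof. by apply: (big_morph (fun x => gmul x a)) => [x y|]; rewrite ?gmulDl ?gmul0l. Qed.

Lemma gscale0 a : gscale 0 a = 0.
Proof. by apply/ffunP => m; rewrite !ffunE mul0r. Qed.

Lemma gscalex0 (c : algC) : gscale c (0 : galg gT) = 0.
Proof. by apply/ffunP => m; rewrite !ffunE mulr0. Qed.

Lemma gscale1 a : gscale 1 a = a.
Proof. by apply/ffunP => m; rewrite !ffunE mul1r. Qed.

Lemma gscaleA (c d : algC) a : gscale c (gscale d a) = gscale (c * d) a.
Proof. by apply/ffunP => m; rewrite !ffunE mulrA. Qed.

Lemma gscaleD (c d : algC) a : gscale c a + gscale d a = gscale (c + d) a.
Proof. by apply/ffunP => m; rewrite !ffunE mulrDl. Qed.

Lemma nz_point a : a != 0 -> exists m, a m != 0.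
Proof.
move=> nz_a; have [m am|a0] := pickP (fun m => a m != 0); first by exists m.
by case/eqP: nz_a; apply/ffunP => m; rewrite ffunE; apply/eqP/negbFE/a0.
Qed.

Lemma gscale_inj a (c d : algC) : a != 0 -> gscale c a = gscale d a -> c = d.
Proof. by case/nz_point => m am /ffunP/(_ m); rewrite !ffunE; apply: mulIf. Qed.

(* A nonzero idempotent multiple of a nonzero idempotent is the idempotent
   itself; this is the rigidity behind both primitivity and the orbit
   dichotomy. *)
Lemma gidem_scale1 (e : galg gT) (c : algC) :
  gidem e -> e != 0 -> gidem (gscale c e) -> gscale c e != 0 -> c = 1.
Proof.
move=> ide nz_e idce nz_ce.
have cc : c * c = c.
  by apply: (gscale_inj nz_e); rewrite -gscaleA -{2}idce gmulZl gmulZr ide.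
have c0 : c != 0 by apply: contraNneq nz_ce => ->; rewrite gscale0.
by apply: (mulIf c0); rewrite mul1r.
Qed.

Definition gdelta (g : gT) : galg gT := [ffun x => (x == g)%:R].

Lemma galg_decomp a : a = \sum_g gscale (a g) (gdelta g).
Proof.
apply/ffunP => x; rewrite sum_ffunE (bigD1 x) //= big1 => [|g /negbTE ngx].
  by rewrite !ffunE eqxx mulr1 addr0.
by rewrite !ffunE eq_sym ngx mulr0.
Qed.

Lemma gmul_deltar a y g : gmul a (gdelta y) g = a (g * y^-1)%g.
Proof.
rewrite ffunE (bigD1 (g * y^-1)%g) //= big1 => [|x nx].
  by rewrite ffunE invMg invgK mulgKV eqxx mulr1 addr0.
rewrite ffunE; case: eqP => [e|]; last by rewrite mulr0.
by case/eqP: nx; rewrite -e invMg invgK mulgA mulgV mul1g.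
Qed.

Lemma gmul_deltal a y g : gmul (gdelta y) a g = a (y^-1 * g)%g.
Proof.
rewrite ffunE (bigD1 y) //= big1 => [|x nx]; first by rewrite ffunE eqxx mul1r addr0.
by rewrite ffunE (negbTE nx) mul0r.
Qed.

Lemma gdelta_conj a y : gmul (gdelta y) a = gmul (gconj y a) (gdelta y).
Proof.
by apply/ffunP => g; rewrite gmul_deltal gmul_deltar ffunE /conjg -!mulgA mulVg mulg1.
Qed.

Lemma gdeltaM x y : gmul (gdelta x) (gdelta y) = gdelta (x * y)%g.
Proof. by apply/ffunP => g; rewrite gmul_deltal !ffunE -(inj_eq (mulgI x)) mulKVg. Qed.

Lemma in_galgP (A : {set gT}) a x : in_galg A a -> x \notin A -> a x = 0.
Proof. by move=> /forallP/(_ x)/implyP aA /aA/eqP. Qed.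

Lemma in_galgI (A : {set gT}) a : (forall x, x \notin A -> a x = 0) -> in_galg A a.
Proof. by move=> a0; apply/forallP => x; apply/implyP => /a0 ->. Qed.

Lemma in_galg_mul (A B : {set gT}) a b :
  in_galg A a -> in_galg B b -> in_galg (A * B)%g (gmul a b).
Proof.
move=> Aa Bb; apply: in_galgI => g ngAB; rewrite ffunE big1 // => x _.
have [xA|xA] := boolP (x \in A); last by rewrite (in_galgP Aa xA) mul0r.
have [yB|yB] := boolP ((x^-1 * g)%g \in B); last by rewrite (in_galgP Bb yB) mulr0.
by case/negP: ngAB; rewrite -(mulKVg x g) mem_mulg.
Qed.

Lemma in_galg_mulG (A : {group gT}) a b :
  in_galg A a -> in_galg A b -> in_galg A (gmul a b).
Proof. by move=> Aa Ab; have := in_galg_mul Aa Ab; rewrite mulGid. Qed.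

Lemma in_galg_sub (A B : {set gT}) a : A \subset B -> in_galg A a -> in_galg B a.
Proof.
move=> sAB Aa; apply: in_galgI => x nxB; apply: (in_galgP Aa).
by apply: contra nxB; apply: (subsetP sAB).
Qed.

Lemma in_galg_delta (A : {set gT}) g : g \in A -> in_galg A (gdelta g).
Proof.
by move=> gA; apply: in_galgI => x nx; rewrite ffunE; case: eqP nx => // ->; rewrite gA.
Qed.

Lemma gmulC (A : {group gT}) a b : abelian A ->
  in_galg A a -> in_galg A b -> gmul a b = gmul b a.
Proof.
move=> abA Aa Ab; apply/ffunP => g.
have [gA|ngA] := boolP (g \in A); last first.
  by rewrite (in_galgP (in_galg_mulG Aa Ab) ngA) (in_galgP (in_galg_mulG Ab Aa) ngA).
have inj_g : injective (fun y : gT => g * y^-1)%g by move=> y1 y2 /mulgI /invg_inj.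
rewrite !ffunE (reindex_inj inj_g) /=; apply: eq_bigr => y _.
rewrite invMg invgK mulgKV.
have [yA|nyA] := boolP (y \in A); last by rewrite (in_galgP Ab nyA) mulr0 mul0r.
by rewrite mulrC (centsP abA _ (groupVr yA) _ gA).
Qed.

Lemma gmul_coef_ti (A B : {group gT}) a b m k : (A :&: B = 1)%g ->
  in_galg A a -> in_galg B b -> m \in A -> k \in B ->
  gmul a b (m * k)%g = a m * b k.
Proof.
move=> tiAB Aa Bb mA kB; rewrite ffunE (bigD1 m) //= mulKg big1 ?addr0 // => x nxm.
have [xA|xA] := boolP (x \in A); last by rewrite (in_galgP Aa xA) mul0r.
have [yB|yB] := boolP ((x^-1 * (m * k))%g \in B); last by rewrite (in_galgP Bb yB) mulr0.
have : (x^-1 * m)%g \in (A :&: B)%g.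
  rewrite inE groupM ?groupV //=.
  by have := groupM yB (groupVr kB); rewrite mulgA mulgK.
rewrite tiAB inE -(inj_eq (mulgI x)) mulKVg mulg1 => /eqP xm.
by case/eqP: nxm.
Qed.

Lemma gconjM k a b : gconj k (gmul a b) = gmul (gconj k a) (gconj k b).
Proof.
apply/ffunP => m; rewrite !ffunE (reindex_inj (@conjg_inj _ k)) /=.
by apply: eq_bigr => y _; rewrite !ffunE conjMg conjVg.
Qed.

Lemma gconj_comp k h a : gconj k (gconj h a) = gconj (k * h)%g a.
Proof. by apply/ffunP => m; rewrite !ffunE conjgM. Qed.

Lemma gconjK k a : gconj k^-1 (gconj k a) = a.
Proof. by apply/ffunP => m; rewrite gconj_comp mulVg !ffunE conjg1. Qed.

Lemma gconj_inj k : injective (@gconj gT k).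
Proof. by move=> a b /(congr1 (gconj k^-1)); rewrite !gconjK. Qed.

Lemma gconjZ k (c : algC) a : gconj k (gscale c a) = gscale c (gconj k a).
Proof. by apply/ffunP => m; rewrite !ffunE. Qed.

Lemma gconj0 k : gconj k (0 : galg gT) = 0.
Proof. by apply/ffunP => m; rewrite !ffunE. Qed.

Lemma in_galg_conj (A : {set gT}) k a :
  k \in 'N(A)%g -> in_galg A a -> in_galg A (gconj k a).
Proof. by move=> nAk Aa; apply: in_galgI => x nx; rewrite ffunE (in_galgP Aa) // memJ_norm. Qed.

Section EigenbasisElement.
Variables (K : {set gT}) (P : seq (galg gT)) (J : galg gT).
Hypotheses (hP : idem_eigenbasis K P) (JP : J \in P).

Lemma eigenbasis_supp : in_galg K J.
Proof. by case: hP => [[_ _ suppP _ _] _]; apply: suppP. Qed.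

Lemma eigenbasis_eig a : in_galg K a -> exists lam, gmul a J = gscale lam J.
Proof. by case: hP => [_ [eigP _]] Ka; apply: eigP. Qed.

Lemma eigenbasis_idem : gmul J J = J.
Proof.
case: hP => [_ [_ orthP]]; have iP : (index J P < size P)%N by rewrite index_mem.
by have := orthP (Ordinal iP) (Ordinal iP); rewrite eqxx /= nth_index.
Qed.

Lemma eigenbasis_nz : J != 0.
Proof.
case: hP => [[_ _ _ freeP _] _]; apply/negP => /eqP J0.
have iP : (index J P < size P)%N by rewrite index_mem.
pose i := Ordinal iP.
have := freeP (fun j => (j == i)%:R); rewrite big1 => [/(_ erefl i)|j _].
  by rewrite eqxx => /eqP; rewrite oner_eq0.
by case: eqP => [->|_]; rewrite ?gscale0 //= nth_index // J0 gscalex0.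
Qed.

End EigenbasisElement.

(* Primitivity criterion: a nonzero idempotent e of C[G] with e C[G] e ⊆ C e
   is primitive, since any idempotent summand e1 of e satisfies e1 = e e1 e. *)
Lemma primitive_idem_corner (G : {set gT}) e :
  in_galg G e -> gidem e -> e != 0 ->
  (forall a, in_galg G a -> exists c : algC, gmul (gmul e a) e = gscale c e) ->
  primitive_idem G e.
Proof.
move=> Ge ide nz_e corner; split=> // -[e1 [e2 [[G1 _ id1 _] [nz1 nz2 o12 o21 de]]]].
have e1_corner : gmul (gmul e e1) e = e1.
  by rewrite de gmulDl id1 o21 addr0 gmulDr id1 o12 addr0.
have [c e1c] := corner _ G1; rewrite e1_corner in e1c.
have c1 : c = 1 by apply: (gidem_scale1 ide nz_e); rewrite -e1c.
move: de; rewrite e1c c1 gscale1 -{1}(addr0 e) => /addrI e20.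
by case/eqP: nz2.
Qed.

End GroupAlgebra.

Section EigenbasisOrbit.
Variables (gT : finGroupType) (N H : {group gT}).
Hypotheses (abN : abelian N) (nNH : H \subset 'N(N)%g).
Variables (PN : seq (galg gT)) (v0 : galg gT).
Hypotheses (hPN : idem_eigenbasis N PN) (v0P : v0 \in PN).

Lemma orbit_supp k : k \in H -> in_galg N (gconj k v0).
Proof. by move=> kH; apply: in_galg_conj (subsetP nNH k kH) (eigenbasis_supp hPN v0P). Qed.

Lemma orbit_idem k : gidem (gconj k v0).
Proof. by rewrite /gidem -gconjM (eigenbasis_idem hPN v0P). Qed.

Lemma orbit_nz k : gconj k v0 != 0.
Proof. by rewrite -(gconj0 k) (inj_eq (@gconj_inj _ k)) (eigenbasis_nz hPN v0P). Qed.

Lemma orbit_eig k a : k \in H -> in_galg N a ->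
  exists lam : algC, gmul a (gconj k v0) = gscale lam (gconj k v0).
Proof.
move=> kH Na.
have Na' : in_galg N (gconj k^-1 a) by apply: in_galg_conj Na; rewrite (subsetP nNH) ?groupV.
have [lam Hlam] := eigenbasis_eig hPN v0P Na'; exists lam.
by rewrite -{1}(gconjK k^-1 a) invgK -gconjM Hlam gconjZ.
Qed.

Lemma orbit_dichotomy k l : k \in H -> l \in H ->
  gmul (gconj k v0) (gconj l v0) = 0 \/ gconj l v0 = gconj k v0.
Proof.
move=> kH lH; set x := gconj k v0; set y := gconj l v0.
have [l1 xy] := orbit_eig lH (orbit_supp kH).
have [l2 yx] := orbit_eig kH (orbit_supp lH).
have l1y_l2x : gscale l1 y = gscale l2 x.
  by rewrite -xy -yx; apply: gmulC abN (orbit_supp kH) (orbit_supp lH).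
have [l10|nz_l1] := eqVneq l1 0; [by left; rewrite xy l10 gscale0 | right].
have y_x : y = gscale (l1^-1 * l2) x by rewrite -gscaleA -l1y_l2x gscaleA mulVf ?gscale1.
suff c1 : l1^-1 * l2 = 1 by rewrite y_x c1 gscale1.
apply: (gidem_scale1 (orbit_idem k) (orbit_nz k)); rewrite -/x -y_x.
- exact: orbit_idem.
- exact: orbit_nz.
Qed.

End EigenbasisOrbit.

Section OrbitTimesStabiliser.
Variables (gT : finGroupType) (G N H : {group gT}).
Hypotheses (abN : abelian N) (abH : abelian H).
Hypotheses (defG : (N * H)%g = G) (nNH : H \subset 'N(N)%g) (tiNH : (N :&: H = 1)%g).
Variables (PN : seq (galg gT)) (v0 : galg gT) (PHa : seq (galg gT)).
Hypotheses (hPN : idem_eigenbasis N PN) (v0P : v0 \in PN).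
Local Notation Ha := [set k in H | gconj k v0 == v0].
Hypothesis hPHa : idem_eigenbasis Ha PHa.
Variables (h : gT) (u : galg gT).
Hypotheses (hH : h \in H) (uP : u \in PHa).
Local Notation v := (gconj h v0).
Local Notation e := (gmul (gconj h v0) u).

Lemma stab_sub : Ha \subset H.
Proof. by apply/subsetP => k; rewrite inE => /andP[]. Qed.

(* Since H is abelian, H_a is also the stabiliser of v in H. *)
Lemma conj_v k : k \in H -> gconj k v = gconj h (gconj k v0).
Proof. by move=> kH; rewrite !gconj_comp (centsP abH _ kH _ hH). Qed.

Lemma stab_conj_v k : k \in H -> (gconj k v == v) = (k \in Ha).
Proof. by move=> kH; rewrite conj_v // (inj_eq (@gconj_inj _ h)) inE kH. Qed.

Lemma u_supp : in_galg H u.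
Proof. exact: in_galg_sub stab_sub (eigenbasis_supp hPHa uP). Qed.

(* v commutes with u, because u is supported on the stabiliser of v. *)
Lemma uv_comm : gmul v u = gmul u v.
Proof.
rewrite (galg_decomp u) gmul_sumr gmul_suml; apply: eq_bigr => k _.
rewrite gmulZr gmulZl.
have [kHa|nkHa] := boolP (k \in Ha); last first.
  by rewrite (in_galgP (eigenbasis_supp hPHa uP) nkHa) !gscale0.
have kH := subsetP stab_sub k kHa.
by move: kHa; rewrite -stab_conj_v // gdelta_conj => /eqP->.
Qed.

Lemma e_supp : in_galg G e.
Proof. by rewrite -defG; apply: in_galg_mul (orbit_supp nNH hPN v0P hH) u_supp. Qed.

Lemma e_idem : gidem e.
Proof.
rewrite /gidem !gmulA -(gmulA u v u) -uv_comm gmulA (eigenbasis_idem hPHa uP).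
by rewrite -gmulA (orbit_idem hPN v0P).
Qed.

(* e has the nonzero coefficient v(m) u(k) at m k, as N ∩ H = 1. *)
Lemma e_nz : e != 0.
Proof.
have [m vm] := nz_point (orbit_nz hPN v0P h).
have [k uk] := nz_point (eigenbasis_nz hPHa uP).
have mN : m \in N by apply: contraR vm => /(in_galgP (orbit_supp nNH hPN v0P hH)) ->.
have kH : k \in H by apply: contraR uk => /(in_galgP u_supp) ->.
apply: contraNneq (mulf_neq0 vm uk) => e0.
by rewrite -(gmul_coef_ti tiNH (orbit_supp nNH hPN v0P hH) u_supp) // e0 ffunE.
Qed.

(* e δ_k e = v (v^k) δ_k u for k ∈ H: it vanishes unless k ∈ H_a, where it
   is a multiple of e since u is an eigenvector of δ_k. *)
Lemma corner_H k : k \in H -> exists c : algC, gmul (gmul e (gdelta k)) e = gscale c e.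
Proof.
move=> kH.
have u_dk : gmul u (gdelta k) = gmul (gdelta k) u := gmulC abH u_supp (in_galg_delta kH).
have -> : gmul (gmul e (gdelta k)) e = gmul (gmul (gmul v (gconj k v)) (gdelta k)) u.
  have u_vu : gmul u (gmul v u) = gmul v u.
    by rewrite uv_comm -gmulA (eigenbasis_idem hPHa uP).
  rewrite !gmulA -[gmul u (gmul (gdelta k) _)]gmulA u_dk gmulA u_vu.
  by rewrite -[gmul (gdelta k) (gmul v u)]gmulA gdelta_conj !gmulA.
have [vvk0|vk_v] := orbit_dichotomy abN nNH hPN v0P hH (groupM kH hH).
  by exists 0; rewrite gconj_comp vvk0 !gmul0l gscale0.
rewrite gconj_comp vk_v (orbit_idem hPN v0P h).
have kHa : k \in Ha by rewrite -stab_conj_v // gconj_comp vk_v.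
have [mu dk_u] := eigenbasis_eig hPHa uP (in_galg_delta kHa).
by exists mu; rewrite gmulA dk_u gmulZr.
Qed.

(* For g = n k with n ∈ N, k ∈ H: e δ_n = χ(n) e, reducing to corner_H. *)
Lemma corner_delta g : g \in G -> exists c : algC, gmul (gmul e (gdelta g)) e = gscale c e.
Proof.
rewrite -defG => /mulsgP[n k nN kH ->].
have [chi v_dn] := orbit_eig nNH hPN v0P hH (in_galg_delta nN).
have e_dn : gmul e (gdelta n) = gscale chi e.
  by rewrite uv_comm gmulA (gmulC abN (orbit_supp nNH hPN v0P hH) (in_galg_delta nN))
             v_dn gmulZr.
have [c Hc] := corner_H kH.
by exists (chi * c); rewrite -gdeltaM -(gmulA e) e_dn gmulZl gmulZl Hc gscaleA.
Qed.

Lemma corner a : in_galg G a -> exists c : algC, gmul (gmul e a) e = gscale c e.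
Proof.
move=> Ga; rewrite (galg_decomp a) gmul_sumr gmul_suml.
apply: (big_ind (fun x => exists c : algC, x = gscale c e)).
- by exists 0; rewrite gscale0.
- by move=> x y [c1 ->] [c2 ->]; exists (c1 + c2); rewrite gscaleD.
move=> g _; rewrite gmulZr gmulZl.
have [gG|ngG] := boolP (g \in G); last by exists 0; rewrite (in_galgP Ga ngG) !gscale0.
by have [c ->] := corner_delta gG; exists (a g * c); rewrite gscaleA.
Qed.

End OrbitTimesStabiliser.

Unset Implicit Arguments.
Theorem mainTheorem6 (gT : finGroupType) (G N H : {group gT})
  (sdG : (N ><| H)%g = G) (abN : abelian N) (abH : abelian H)
  (PN : seq (galg gT)) (hPN : idem_eigenbasis N PN)
  (v0 : galg gT) (v0P : v0 \in PN)
  (PHa : seq (galg gT))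
  (hPHa : idem_eigenbasis [set h in H | gconj h v0 == v0] PHa) :
  forall (h : gT) (u : galg gT), h \in H -> u \in PHa ->
    primitive_idem G (gmul (gconj h v0) u).
Proof.
move=> h u hH uP; have [_ _ defG nNH tiNH] := sdprod_context sdG.
apply: primitive_idem_corner.
- exact: (e_supp defG nNH hPN v0P hPHa hH uP).
- exact: (e_idem abH hPN v0P hPHa hH uP).
- exact: (e_nz nNH tiNH hPN v0P hPHa hH uP).
- exact: (corner abN abH defG nNH hPN v0P hPHa hH uP).
Qed.
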